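(* Let $2\le R<K$ and $\epsilon\in(0,1)$, and let $$m=\left\lceil\frac{K(K-1)}{(K-R)(R-1)}\log\!\Big(\frac{K}{\epsilon}\Big)\right\rceil.$$ Choose $\mathcal{Y}_1,\ldots,\mathcal{Y}_m$ independently and uniformly at random among the $R$-element subsets of $[K]$. Let $Z$ be uniform on $[K]$, independent of the $\mathcal{Y}_i$, and, given $\mathcal{Y}_1,\ldots,\mathcal{Y}_m$ and $Z=k$, let $Y_1,\ldots,Y_m$ be conditionally independent with $Y_i=k$ if $k\in\mathcal{Y}_i$ and $Y_i$ uniform on $\mathcal{Y}_i$ if $k\notin\mathcal{Y}_i$. Let $g$ be the maximum-likelihood decoder $g(y)\in\arg\max_{k\in[K]}\mathcal{L}(y;k)$ with $\mathcal{L}(y;k)=\prod_{i=1}^m\mathbb{P}(Y_i=y_i\mid Z=k,\mathcal{Y}_1,\ldots,\mathcal{Y}_m)$, ties broken arbitrarily. Then $\mathbb{P}(g(Y)\ne Z)\le\epsilon$, where the probability is over the random choice of the $\mathcal{Y}_i$, of $Z$, and of $Y$.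
   Context: $[K]=\{1,\ldots,K\}$; $\log$ denotes the natural logarithm. *)

From HB Require Import structures.
From mathcomp Require Import all_boot all_order all_algebra.
From mathcomp Require Import reals exp.
Set Implicit Arguments. Unset Strict Implicit. Unset Printing Implicit Defensive.
Import Order.TTheory GRing.Theory Num.Theory.
Local Open Scope ring_scope.

Section Coded.
Variables (R : realType) (K r m : nat).

(* P(Y_i = y | Z = z, calY_i = S): y = z if z in S, uniform on S otherwise. *)
Definition chan (S : {set 'I_K}) (z y : 'I_K) : R :=
  if z \in S then (y == z)%:R else (y \in S)%:R / r%:R.

Definition lik (Ys : {ffun 'I_m -> {set 'I_K}}) (y : {ffun 'I_m -> 'I_K})
    (k : 'I_K) : R :=
  \prod_(i < m) chan (Ys i) k (y i).

Definition validYs (Ys : {ffun 'I_m -> {set 'I_K}}) : bool :=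
  [forall i, #|Ys i| == r].

Definition is_ML
    (g : {ffun 'I_m -> {set 'I_K}} -> {ffun 'I_m -> 'I_K} -> 'I_K) : Prop :=
  forall Ys y k, validYs Ys -> lik Ys y k <= lik Ys y (g Ys y).

Definition err_prob
    (g : {ffun 'I_m -> {set 'I_K}} -> {ffun 'I_m -> 'I_K} -> 'I_K) : R :=
  \sum_(Ys | validYs Ys) \sum_(z : 'I_K) \sum_(y : {ffun 'I_m -> 'I_K})
    ((('C(K, r))%:R)^-1 ^+ m * (K%:R)^-1 * lik Ys y z * (g Ys y != z)%:R).

End Coded.

From HB Require Import structures.
From mathcomp Require Import all_boot all_order all_algebra.
From mathcomp Require Import reals exp sequences.
From mathcomp Require Import ring lra zify.
Set Implicit Arguments. Unset Strict Implicit. Unset Printing Implicit Defensive.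
Import Order.TTheory GRing.Theory Num.Theory.
Local Open Scope ring_scope.

(* Union bound: if the ML decoder errs on the true symbol z and L(y;z) > 0,
   some k <> z has L(y;k) >= L(y;z); hence
     L(y;z) [g(y) <> z] <= sum_(k <> z) prod_i conf(Y_i, z, k, y_i),
   where conf S z k x = chan S k x * [chan S z x <> 0] is the probability that
   symbol k produces the observation x and that x is compatible with z.
   Each product factorises over the m independent queries, so summing over y
   and over the uniform r-subsets gives (sum_S overlap S z k)^m, with
   overlap S z k = sum_x conf S z k x.  Counting r-subsets by whether they
   contain z and k shows sum_S overlap S z k = C(K,r) (K-r)/(K-1).  Hence
     P(error) <= (K-1) ((K-r)/(K-1))^m,
   and 1 - x <= exp(-x) together with the choice of m bounds this by eps. *)

Section Overlap.
Variables (R : realType) (K r : nat).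
Hypothesis r_gt0 : (0 < r)%N.

Lemma chan_ge0 (S : {set 'I_K}) (z y : 'I_K) : 0 <= @chan R K r S z y.
Proof. by rewrite /chan; case: ifP => _; rewrite ?divr_ge0 ?ler0n. Qed.

Definition conf (S : {set 'I_K}) (z k x : 'I_K) : R :=
  @chan R K r S k x * (@chan R K r S z x != 0)%:R.

Lemma conf_ge0 (S : {set 'I_K}) (z k x : 'I_K) : 0 <= conf S z k x.
Proof. by rewrite mulr_ge0 ?ler0n ?chan_ge0. Qed.

Definition overlap (S : {set 'I_K}) (z k : 'I_K) : R := \sum_x conf S z k x.

Lemma r_neq0 : (r%:R : R) != 0.
Proof. by rewrite pnatr_eq0 -lt0n. Qed.

(* If z is in S, only the output z is compatible with z, and k (outside S)
   produces it with probability 1/r; otherwise every output of k lies in S,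
   and all of S is compatible with z. *)
Lemma overlapE (S : {set 'I_K}) (z k : 'I_K) : k != z -> #|S| = r ->
  overlap S z k = if z \in S then (k \notin S)%:R / r%:R else 1.
Proof.
move=> kz cardS; rewrite /overlap /conf; case: ifP => zS.
  rewrite (bigD1 z) //= big1 => [|x xz]; last first.
    by rewrite /chan zS (negbTE xz) eqxx mulr0.
  rewrite addr0 /chan zS eqxx oner_eq0 mulr1 eq_sym (negbTE kz).
  by case: (k \in S); rewrite ?mul0r ?mul1r.
have compatE x : (@chan R K r S z x != 0) = (x \in S).
  rewrite /chan zS mulf_eq0 invr_eq0 negb_or r_neq0 andbT.
  by case: (x \in S); rewrite ?oner_eq0 ?eqxx.
under eq_bigr do rewrite compatE mulr_natr mulrb.
rewrite -big_mkcond /=; case kS: (k \in S).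
  rewrite (bigD1 k) //= big1 => [|x /andP[_ xk]]; last first.
    by rewrite /chan kS (negbTE xk).
  by rewrite /chan kS eqxx addr0.
rewrite (eq_bigr (fun _ => (r%:R : R)^-1)) => [|x xS]; last first.
  by rewrite /chan kS xS mul1r.
by rewrite sumr_const cardS -(mulr_natr ((r%:R : R)^-1)) mulVf // r_neq0.
Qed.

Lemma sum_rsubsets (B : {set 'I_K}) :
  \sum_(S : {set 'I_K} | (#|S| == r) && (S \subset B)) (1 : R) = 'C(#|B|, r)%:R.
Proof.
rewrite (eq_bigr (fun _ => 1%N%:R)) // -natr_sum sum1dep_card -cards_draws.
by congr (_%:R); apply: eq_card => S; rewrite !inE andbC.
Qed.

Lemma subsetC1 (S : {set 'I_K}) (z : 'I_K) : (S \subset [set~ z]) = (z \notin S).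
Proof. by rewrite subsetC sub1set inE. Qed.

(* Subsets containing z but not k: those avoiding k minus those avoiding both. *)
Lemma sum_rsubsets_in_notin (z k : 'I_K) : k != z ->
  \sum_(S : {set 'I_K} | (#|S| == r) && (z \in S)) ((k \notin S)%:R : R)
  = 'C(K.-1, r)%:R - 'C(K.-2, r)%:R.
Proof.
move=> kz.
have card2 : #|[set~ k] :&: [set~ z]| = K.-2.
  have := cardsC ([set k] :|: [set z]).
  by rewrite -setCU card_ord cards2 kz /=; lia.
have card1 : #|[set~ k]| = K.-1 by rewrite cardsC1 card_ord.
rewrite -card2 -card1 -!sum_rsubsets.
apply/eqP; rewrite eq_sym subr_eq; apply/eqP.
rewrite [X in _ = _ + X]big_mkcond [X in _ = X + _]big_mkcond.
rewrite [X in X = _]big_mkcond -big_split /=.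
apply: eq_bigr => S _; rewrite subsetI !subsetC1.
by case: (#|S| == r); case: (z \in S); case: (k \in S); rewrite /= ?addr0 ?add0r.
Qed.

Hypothesis r_lt_K : (r < K)%N.

Lemma binomial_overlap :
  'C(K.-1, r)%:R + ('C(K.-1, r)%:R - 'C(K.-2, r)%:R) / r%:R
  = 'C(K, r)%:R * ((K%:R - r%:R) / (K%:R - 1)) :> R.
Proof.
have [n K_eq] : exists n, K = n.+2 by exists K.-2; lia.
have [s r_eq] : exists s, r = s.+1 by exists r.-1; lia.
have s_le_n : (s <= n)%N by lia.
rewrite K_eq r_eq /=; clear K_eq r_eq.
have /(congr1 (fun x => x%:R : R)) diag := mul_bin_diag n.+1 s.
have /(congr1 (fun x => x%:R : R)) down := mul_bin_down n.+2 s.+1.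
rewrite /= !natrM in diag down; rewrite natrB in down; last by rewrite ltnS ltnW.
have -> : 'C(n.+1, s.+1)%:R - 'C(n, s.+1)%:R = 'C(n, s)%:R :> R.
  by rewrite binS natrD addrAC subrr add0r.
have n2E : (n.+2%:R : R) = n.+1%:R + 1 by rewrite -natr1.
rewrite n2E addrK in down *.
have n_gt0 : (0 : R) < n.+1%:R by rewrite ltr0n.
have s_gt0 : (0 : R) < s.+1%:R by rewrite ltr0n.
have -> : ('C(n, s)%:R : R) = s.+1%:R * 'C(n.+1, s.+1)%:R / n.+1%:R.
  by rewrite -diag mulrC mulKf // pnatr_eq0.
rewrite mulrA (mulrC 'C(n.+2, s.+1)%:R) -down.
by field; lra.
Qed.

Lemma sum_overlap (z k : 'I_K) : k != z ->
  \sum_(S : {set 'I_K} | #|S| == r) overlap S z k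
  = 'C(K, r)%:R * ((K%:R - r%:R) / (K%:R - 1)).
Proof.
move=> kz; rewrite -binomial_overlap.
under eq_bigr => S /eqP cardS do rewrite overlapE //.
rewrite (bigID (fun S : {set 'I_K} => z \in S)) /= addrC.
under eq_bigr => S /andP[_ /negbTE ->] do [].
under [X in _ + X]eq_bigr => S /andP[_ ->] do [].
rewrite -mulr_suml sum_rsubsets_in_notin //.
under eq_bigl => S do rewrite -subsetC1.
by rewrite sum_rsubsets cardsC1 card_ord.
Qed.

End Overlap.

Section Decoding.
Variables (R : realType) (K r m : nat).

Lemma lik_ge0 Ys y k : 0 <= @lik R K r m Ys y k.
Proof. by apply: prodr_ge0 => i _; apply: chan_ge0. Qed.

Lemma ML_error_le_confusions g (hg : @is_ML R K r m g) Ys y z : validYs r Ys ->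
  @lik R K r m Ys y z * (g Ys y != z)%:R <=
  \sum_(k | k != z) \prod_i conf R r (Ys i) z k (y i).
Proof.
move=> vYs.
have rhs_ge0 : 0 <= \sum_(k | k != z) \prod_i conf R r (Ys i) z k (y i).
  by rewrite sumr_ge0 // => k _; rewrite prodr_ge0 // => i _; apply: conf_ge0.
case: eqP => [_|gz]; first by rewrite mulr0.
have [->|likz] := eqVneq (@lik R K r m Ys y z) 0; first by rewrite mul0r.
(* Where L(y;z) > 0 every output is compatible with z, so conf reduces to chan. *)
have conf_lik k : \prod_i conf R r (Ys i) z k (y i) = @lik R K r m Ys y k.
  rewrite /conf big_split /= [X in _ * X]big1 ?mulr1 // => i _.
  case: eqP => // /eqP chan0; move: likz; rewrite prodf_seq_neq0.
  by move/allP/(_ i (mem_index_enum _)); rewrite chan0.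
under eq_bigr do rewrite conf_lik.
rewrite mulr1; apply: le_trans (hg Ys y z vYs) _.
rewrite (bigD1 (g Ys y)) /=; last exact/eqP.
by rewrite lerDl sumr_ge0 // => k _; apply: lik_ge0.
Qed.

Hypotheses (r_gt0 : (0 < r)%N) (r_lt_K : (r < K)%N).

(* Total confusion mass of z by k <> z, over all queries and outputs:
   it factorises over the m independent queries. *)
Lemma confusion_mass (z k : 'I_K) : k != z ->
  \sum_(Ys | validYs r Ys) \sum_(y : {ffun 'I_m -> 'I_K})
    \prod_i conf R r (Ys i) z k (y i)
  = ('C(K, r)%:R * ((K%:R - r%:R) / (K%:R - 1))) ^+ m.
Proof.
move=> kz.
under eq_bigr => Ys _ do
  rewrite -(bigA_distr_bigA (fun i x => conf R r (Ys i) z k x)).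
rewrite (eq_bigl (fun Ys => Ys \in ffun_on (fun S : {set 'I_K} => #|S| == r))).
  rewrite -(bigA_distr_big (fun S : {set 'I_K} => #|S| == r)
                           (fun (_ : 'I_m) S => overlap R r S z k)) /=.
  by rewrite (eq_bigr _ (fun i _ => sum_overlap R r_gt0 r_lt_K kz)) prodr_const card_ord.
by move=> Ys; apply/forallP/ffun_onP.
Qed.

Lemma err_prob_le g : @is_ML R K r m g ->
  @err_prob R K r m g <= (K%:R - 1) * ((K%:R - r%:R) / (K%:R - 1)) ^+ m.
Proof.
move=> hg; set C : R := 'C(K, r)%:R; set rho := (K%:R - r%:R) / (K%:R - 1) : R.
set c := C^-1 ^+ m * (K%:R)^-1.
have c_ge0 : 0 <= c by rewrite mulr_ge0 ?exprn_ge0 // invr_ge0 ler0n.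
have union : @err_prob R K r m g <=
    c * \sum_z \sum_(Ys | validYs r Ys) \sum_(y : {ffun 'I_m -> 'I_K})
      \sum_(k | k != z) \prod_i conf R r (Ys i) z k (y i).
  rewrite /err_prob exchange_big mulr_sumr ler_sum // => z _.
  rewrite mulr_sumr ler_sum // => Ys vYs.
  rewrite mulr_sumr ler_sum // => y _.
  by rewrite -mulrA ler_wpM2l // ML_error_le_confusions.
have mass z : \sum_(Ys | validYs r Ys) \sum_(y : {ffun 'I_m -> 'I_K})
      \sum_(k | k != z) \prod_i conf R r (Ys i) z k (y i) = (C * rho) ^+ m *+ K.-1.
  under eq_bigr do rewrite exchange_big /=.
  rewrite exchange_big /= (eq_bigr _ (fun k kz => confusion_mass kz)).
  by rewrite sumr_const cardC1 card_ord.
apply: le_trans union _; rewrite le_eqVlt; apply/orP; left; apply/eqP.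
have C_neq0 : C != 0 by rewrite pnatr_eq0 -lt0n bin_gt0 ltnW.
have K_neq0 : (K%:R : R) != 0 by rewrite pnatr_eq0; lia.
have K1 : (K.-1%:R : R) = K%:R - 1 by rewrite -subn1 natrB //; lia.
rewrite (eq_bigr _ (fun z _ => mass z)) sumr_const card_ord -mulrnA.
rewrite -[_ *+ (_ * _)]mulr_natr natrM K1 /c exprMn exprVn.
by field; rewrite expf_neq0 // K_neq0.
Qed.

End Decoding.

Lemma union_bound_le_eps (R : realType) (K r : nat) (eps : R) (m : nat)
  (hr : (2 <= r)%N) (hrK : (r < K)%N) (heps0 : 0 < eps) (heps1 : eps < 1)
  (hm : m%:Z = Num.ceil ((K%:R * (K%:R - 1)) / ((K%:R - r%:R) * (r%:R - 1))
                          * ln (K%:R / eps))) :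
  (K%:R - 1) * ((K%:R - r%:R) / (K%:R - 1)) ^+ m <= eps.
Proof.
have K_gt1 : (1 : R) < K%:R by rewrite ltr1n; lia.
have r_gt1 : (1 : R) < r%:R by rewrite ltr1n; lia.
have r_lt_K : (r%:R : R) < K%:R by rewrite ltr_nat.
set T := _ * ln _ in hm.
have T_le_m : T <= m%:R by have := ceil_ge T; rewrite -hm.
pose x : R := (r%:R - 1) / (K%:R - 1).
have x_ge0 : 0 <= x by rewrite divr_ge0 //; lra.
have rhoE : (K%:R - r%:R) / (K%:R - 1) = 1 - x :> R by rewrite /x; field; lra.
have rho_ge0 : 0 <= 1 - x by rewrite -rhoE divr_ge0 //; lra.
have log_gt0 : 0 < ln (K%:R / eps) :> R.
  by apply: ln_gt0; rewrite ltr_pdivlMr //; lra.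
have ln_le : ln (K%:R / eps) <= x * m%:R.
  apply: le_trans (ler_wpM2l x_ge0 T_le_m); rewrite /T /x mulrA.
  have -> : (r%:R - 1) / (K%:R - 1) * (K%:R * (K%:R - 1) / ((K%:R - r%:R) * (r%:R - 1)))
     = K%:R / (K%:R - r%:R) :> R by field; lra.
  by rewrite ler_peMl //; [lra | rewrite ler_pdivlMr; lra].
have pow_le_exp : (1 - x) ^+ m <= expR (- x) ^+ m.
  apply: lerXn2r; rewrite ?nnegrE ?(ltW (expR_gt0 _)) //.
  by have := expR_ge1Dx (- x); rewrite addrC.
have exp_le : expR (- x) ^+ m <= eps / K%:R.
  rewrite -expRM_natr.
  have -> : eps / K%:R = expR (- ln (K%:R / eps)).
    by rewrite expRN lnK ?invf_div // posrE divr_gt0 //; lra.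
  by rewrite ler_expR mulNr lerN2.
rewrite rhoE; apply: le_trans (ler_wpM2l _ (le_trans pow_le_exp exp_le)) _; first lra.
rewrite mulrA ler_pdivrMr; last lra.
by rewrite mulrC ler_wpM2l //; lra.
Qed.

Theorem theorem5 (R : realType) (K r : nat) (eps : R) (m : nat)
  (hr : (2 <= r)%N) (hrK : (r < K)%N) (heps0 : 0 < eps) (heps1 : eps < 1)
  (hm : m%:Z = Num.ceil ((K%:R * (K%:R - 1)) / ((K%:R - r%:R) * (r%:R - 1))
                          * ln (K%:R / eps)))
  (g : {ffun 'I_m -> {set 'I_K}} -> {ffun 'I_m -> 'I_K} -> 'I_K)
  (hg : @is_ML R K r m g) :
  @err_prob R K r m g <= eps.
Proof.
apply: le_trans (union_bound_le_eps hr hrK heps0 heps1 hm).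
by apply: err_prob_le => //; lia.
Qed.
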